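(* Let $X=\{x_1,\dots,x_n\}$ be a finite set of propositional variables and $y\notin X$ a further variable, and let $\mathcal{L}$ be the set of Boolean circuits over $\mathit{PS}=X\cup\{y\}$. Then there exists a rectification operator $\star$ (in the sense defined in the context), and it is unique up to logical equivalence: if $\star$ and $\star'$ are both rectification operators, then $\Sigma\star T\equiv\Sigma\star' T$ for every classification circuit $\Sigma\in\mathcal{L}$ and every $T\in\mathcal{L}$.
   Context: A Boolean circuit over a set of variables $V$ is a directed acyclic graph whose leaves are labelled by variables of $V$ or by the constants $\top$ (=1) and $\bot$ (=0), and whose internal nodes are labelled by $\neg,\wedge,\vee$ or are decision nodes on a variable $v$ (a decision node on $v$ with low child $M$ and high child $P$ stands for $(\neg v\wedge\Phi_M)\vee(v\wedge\Phi_P)$); it is interpreted with the usual semantics of propositional logic. $\equiv$ denotes logical equivalence and $\models$ logical consequence/model satisfaction. Each instance $\vec x\in\{0,1\}^n$ is identified with the canonical term over $X$ containing $x_i$ if the $i$-th coordinate is 1 and $\neg x_i$ otherwise. For a Boolean circuit $\Phi$ and a consistent term $\gamma$, the conditioning $\Phi(\gamma)$ is the circuit obtained by replacing each occurrence of a variable $v$ of $\gamma$ by $\top$ if $v$ is a positive literal of $\gamma$ and by $\bot$ if $\neg v$ is a literal of $\gamma$. A circuit $\Phi\in\mathcal{L}$ classifies $\vec x$ if $\Phi(\vec x)$ has a unique model over $\{y\}$, i.e. $\Phi(\vec x)\equiv y$ (positive instance) or $\Phi(\vec x)\equiv\neg y$ (negative instance); $\Phi$ has the $XY$-classification property (is a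 classification circuit) if it classifies every $\vec x\in\{0,1\}^n$. For $T\in\mathcal{L}$ and $\vec x$, let $F(T,\vec x)=\top$ if $T(\vec x)$ is inconsistent, and otherwise $F(T,\vec x)$ is the conjunction of all literals $\ell\in\{y,\neg y\}$ with $T(\vec x)\models\ell$ (the empty conjunction being $\top$). $\Sigma$ is fact-compliant with $T$ on $\vec x$ if $\Sigma(\vec x)\models F(T,\vec x)$. For $W\subseteq\mathit{PS}$, $\exists W.\Phi$ denotes forgetting ($\exists\emptyset.\Phi\equiv\Phi$, $\exists\{v\}.\Phi\equiv\Phi(\neg v)\vee\Phi(v)$, iterated over the elements of $W$). A rectification operator $\star$ is a mapping associating with every classification circuit $\Sigma\in\mathcal{L}$ and every $T\in\mathcal{L}$ a circuit $\Sigma\star T\in\mathcal{L}$ such that: (RE1) $\Sigma\star T$ is a classification circuit; (RE2) if $\Sigma$ is fact-compliant with $T$ on $\vec x$, then $(\Sigma\star T)(\vec x)\equiv\Sigma(\vec x)$; (RE3) for every $\vec x$, $(\Sigma\star T)(\vec x)\models F(T,\vec x)$; (RE4) if $T$ is inconsistent then $\Sigma\star T\equiv\Sigma$; (RE5) if $\Sigma\equiv\Sigma'$ and $T\equiv T'$ then $\Sigma\star T\equiv\Sigma'\star T'$; (RE6) $\Sigma\star T\equiv(\exists W.\Sigma)\star(\exists W.T)$ where $W=\mathit{PS}\setminus(X\cup\{y\})$ (here $W=\emptyset$). *)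

From mathcomp Require Import all_boot.
Set Implicit Arguments. Unset Strict Implicit. Unset Printing Implicit Defensive.

(* Propositional variables PS = X ∪ {y}: [Some i] is x_(i+1), [None] is y. *)
Definition var (n : nat) := option 'I_n.
Definition yvar {n : nat} : var n := None.

(* Boolean circuits over PS.  A DAG is represented by its unfolding into a
   tree; sharing does not affect the semantics. *)
Inductive circuit (n : nat) : Type :=
| CVar of var n
| CTop
| CBot
| CNeg of circuit n
| CAnd of circuit n & circuit n
| COr of circuit n & circuit n
| CDec of var n & circuit n & circuit n. (* decision node: var, low child, high child *)

Arguments CTop {n}. Arguments CBot {n}.

Definition assignment (n : nat) := {ffun var n -> bool}.

Fixpoint eval n (a : assignment n) (c : circuit n) : bool :=
  match c with
  | CVar v => a v
  | CTop => true
  | CBot => false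
  | CNeg c1 => ~~ eval a c1
  | CAnd c1 c2 => eval a c1 && eval a c2
  | COr c1 c2 => eval a c1 || eval a c2
  | CDec v lo hi => (~~ a v && eval a lo) || (a v && eval a hi)
  end.

Definition lequiv n (c d : circuit n) : Prop := forall a : assignment n, eval a c = eval a d.
Definition entails n (c d : circuit n) : bool := [forall a : assignment n, eval a c ==> eval a d].
Definition consistent n (c : circuit n) : bool := [exists a : assignment n, eval a c].

Fixpoint cond1 n (v : var n) (b : bool) (c : circuit n) : circuit n :=
  match c with
  | CVar w => if w == v then (if b then CTop else CBot) else CVar w
  | CTop => CTop
  | CBot => CBot
  | CNeg c1 => CNeg (cond1 v b c1)
  | CAnd c1 c2 => CAnd (cond1 v b c1) (cond1 v b c2)
  | COr c1 c2 => COr (cond1 v b c1) (cond1 v b c2)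
  | CDec w lo hi =>
      if w == v then (if b then cond1 v b hi else cond1 v b lo)
      else CDec w (cond1 v b lo) (cond1 v b hi)
  end.

Definition instance (n : nat) := {ffun 'I_n -> bool}.

Fixpoint cond n (x : instance n) (c : circuit n) : circuit n :=
  match c with
  | CVar (Some i) => if x i then CTop else CBot
  | CVar None => CVar None
  | CTop => CTop
  | CBot => CBot
  | CNeg c1 => CNeg (cond x c1)
  | CAnd c1 c2 => CAnd (cond x c1) (cond x c2)
  | COr c1 c2 => COr (cond x c1) (cond x c2)
  | CDec (Some i) lo hi => if x i then cond x hi else cond x lo
  | CDec None lo hi => CDec None (cond x lo) (cond x hi)
  end.

Definition classifies n (c : circuit n) (x : instance n) : Prop :=
  lequiv (cond x c) (CVar yvar) \/ lequiv (cond x c) (CNeg (CVar yvar)).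

Definition classification n (c : circuit n) : Prop := forall x : instance n, classifies c x.

Definition F n (T : circuit n) (x : instance n) : circuit n :=
  if ~~ consistent (cond x T) then CTop
  else foldr (@CAnd n) CTop
         [seq l <- [:: CVar yvar; CNeg (CVar yvar)] | entails (cond x T) l].

Definition fact_compliant n (S T : circuit n) (x : instance n) : Prop :=
  entails (cond x S) (F T x).

Fixpoint forget n (W : seq (var n)) (c : circuit n) : circuit n :=
  match W with
  | [::] => c
  | v :: W' => forget W' (COr (cond1 v false c) (cond1 v true c))
  end.

(* W = PS \ (X ∪ {y}) ; here PS = X ∪ {y}, so W is empty *)
Definition Wrest (n : nat) : seq (var n) := [::].

Definition rectification_operator n (star : circuit n -> circuit n -> circuit n) : Prop :=
  (forall S T, classification S -> classification (star S T)) /\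
  (forall S T (x : instance n), classification S -> fact_compliant S T x ->
      lequiv (cond x (star S T)) (cond x S)) /\
  (forall S T (x : instance n), classification S ->
      entails (cond x (star S T)) (F T x)) /\
  (forall S T, classification S -> ~~ consistent T -> lequiv (star S T) S) /\
  (forall S S' T T', classification S -> classification S' ->
      lequiv S S' -> lequiv T T' -> lequiv (star S T) (star S' T')) /\
  (forall S T, classification S ->
      lequiv (star S T) (star (forget (Wrest n) S) (forget (Wrest n) T))).

From mathcomp Require Import all_boot.
Set Implicit Arguments. Unset Strict Implicit. Unset Printing Implicit Defensive.

(* Over PS = X ∪ {y}, a classification circuit Σ is determined up to
   equivalence by its labelling x ↦ the value of y forced by Σ(x), and
   F(T, x) only constrains y: it is satisfied by a set of values of y that is
   never empty.  Σ is fact-compliant on x iff its label is allowed there; by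
   RE2 a rectified circuit keeps that label, and otherwise RE3 forces the only
   other value, which is allowed.  So every rectification operator relabels Σ
   in the same way, and realising this labelling by a circuit gives one. *)

Section Rectification.

Variable n : nat.

Implicit Types (a : assignment n) (x : instance n) (c d S T : circuit n).

Definition inputs a : instance n := [ffun i => a (Some i)].

Definition set_inputs a x : assignment n :=
  [ffun v => if v is Some i then x i else a yvar].

Lemma eval_cond a x c : eval a (cond x c) = eval (set_inputs a x) c.
Proof.
elim: c => [[i|]| | |c IH|c IH d IHd|c IH d IHd|[i|] c IH d IHd] /=;
  rewrite ?ffunE ?IH ?IHd //; first by case: (x i).
by case: (x i); rewrite /= ?IH ?IHd ?orbF.
Qed.

Lemma set_inputsK a : set_inputs a (inputs a) = a.
Proof. by apply/ffunP => -[i|]; rewrite !ffunE. Qed.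

Lemma inputs_set_inputs a x : inputs (set_inputs a x) = x.
Proof. by apply/ffunP => i; rewrite !ffunE. Qed.

Lemma eval_cond_inputs a c : eval a c = eval a (cond (inputs a) c).
Proof. by rewrite eval_cond set_inputsK. Qed.

Lemma lequiv_cond x c d : lequiv c d -> lequiv (cond x c) (cond x d).
Proof. by move=> cd a; rewrite !eval_cond cd. Qed.

Lemma consistent_lequiv c d : lequiv c d -> consistent c = consistent d.
Proof. by move=> cd; apply: eq_existsb => a; rewrite cd. Qed.

Lemma entails_lequiv c c' d : lequiv c c' -> entails c d = entails c' d.
Proof. by move=> cc'; apply: eq_forallb => a; rewrite cc'. Qed.

Lemma entails_eq_yvar c d b (g : bool -> bool) :
    (forall a, eval a c = (a yvar == b)) -> (forall a, eval a d = g (a yvar)) ->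
  entails c d = g b.
Proof.
move=> ceq dg; apply/forallP/idP => [/(_ [ffun=> b])|gb a].
  by rewrite ceq dg ffunE eqxx.
by rewrite ceq dg; apply/implyP => /eqP ->.
Qed.

(* The value of y that makes Σ(x) true, when Σ classifies x. *)
Definition label S x : bool := eval [ffun=> true] (cond x S).

Lemma eval_cond_classifies S x a :
  classifies S x -> eval a (cond x S) = (a yvar == label S x).
Proof. by rewrite /label => -[] Sx; rewrite !Sx /= ffunE ?eqb_id ?eqbF_neg. Qed.

Lemma classifies_eq_yvar c x b :
  (forall a, eval a (cond x c) = (a yvar == b)) -> classifies c x.
Proof. by case: b => cb; [left|right] => a; rewrite cb /= ?eqb_id ?eqbF_neg. Qed.

Lemma label_lequiv S S' x : lequiv S S' -> label S x = label S' x.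
Proof. by move=> SS'; apply: (lequiv_cond x SS'). Qed.

Lemma classification_lequiv c d : classification c -> classification d ->
  (forall x, label c x = label d x) -> lequiv c d.
Proof.
move=> cc cd lcd a.
by rewrite (eval_cond_inputs a c) (eval_cond_inputs a d) !eval_cond_classifies ?lcd.
Qed.

(* Whether F(T, x) holds when y := b; it does not depend on the other variables. *)
Definition allowed T x (b : bool) : bool := eval [ffun=> b] (F T x).

Lemma eval_F T x a : eval a (F T x) = allowed T x (a yvar).
Proof.
rewrite /allowed /F; case: (consistent _) => //=.
by case: (entails _ (CVar _)); case: (entails _ (CNeg _)); rewrite /= ?ffunE.
Qed.

Lemma allowed_inconsistent T x b : ~~ consistent T -> allowed T x b.
Proof.
move=> incT; rewrite /allowed /F ifT //; apply: contra incT => /existsP[a Ta].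
by apply/existsP; exists (set_inputs a x); rewrite -eval_cond.
Qed.

Lemma consistent_entails_yvar c :
  consistent c -> ~~ (entails c (CVar yvar) && entails c (CNeg (CVar yvar))).
Proof.
move=> /existsP[a ca]; apply/negP => /andP[/forallP/(_ a) + /forallP/(_ a)].
by rewrite ca /=; case: (a yvar).
Qed.

Lemma allowed_or_negb T x b : allowed T x b || allowed T x (~~ b).
Proof.
rewrite /allowed /F; case: (boolP (consistent _)) => //= /consistent_entails_yvar.
by case: (entails _ (CVar _)); case: (entails _ (CNeg _)); rewrite /= ?ffunE; case: b.
Qed.

Lemma F_lequiv T T' x : lequiv T T' -> F T x = F T' x.
Proof.
move=> /(lequiv_cond x) Tx; rewrite /F (consistent_lequiv Tx).
by congr (if _ then _ else foldr _ _ _); apply: eq_filter => l; apply: entails_lequiv.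
Qed.

Lemma fact_compliantE S T x :
  classifies S x -> entails (cond x S) (F T x) = allowed T x (label S x).
Proof. by move=> Sx; apply: entails_eq_yvar (eval_F T x) => a; apply: eval_cond_classifies. Qed.

Definition rectified_label S T x : bool :=
  if allowed T x (label S x) then label S x else ~~ label S x.

Lemma allowed_rectified_label S T x : allowed T x (rectified_label S T x).
Proof. by rewrite /rectified_label; have := allowed_or_negb T x (label S x); case: ifP. Qed.

Definition minterm x : circuit n :=
  foldr (fun i c => CAnd (if x i then CVar (Some i) else CNeg (CVar (Some i))) c)
    CTop (enum 'I_n).

Lemma eval_minterm a x : eval a (minterm x) = (inputs a == x).
Proof.
have -> : eval a (minterm x) = all (fun i => a (Some i) == x i) (enum 'I_n).
  rewrite /minterm; elim: (enum 'I_n) => [|i s IH] //=.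
  by rewrite IH; case: (x i); rewrite /= ?eqb_id ?eqbF_neg.
apply/allP/eqP => [ax|<- i _]; last by rewrite ffunE.
by apply/ffunP => i; rewrite ffunE; apply/eqP/ax; rewrite mem_enum.
Qed.

Definition dnf (f : instance n -> bool) : circuit n :=
  foldr (fun x c => COr (minterm x) c) CBot [seq x <- enum {ffun 'I_n -> bool} | f x].

Lemma eval_dnf a f : eval a (dnf f) = f (inputs a).
Proof.
have -> : eval a (dnf f) = has (fun x => f x && (inputs a == x)) (enum {ffun 'I_n -> bool}).
  rewrite /dnf; elim: (enum _) => [|x s IH] //=.
  by case: (f x); rewrite /= ?eval_minterm IH.
apply/hasP/idP => [[x _ /andP[fx /eqP ->]] //|fa].
by exists (inputs a); rewrite ?mem_enum ?fa ?eqxx.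
Qed.

Definition classifier (f : instance n -> bool) : circuit n :=
  CDec yvar (CNeg (dnf f)) (dnf f).

Lemma eval_classifier a f : eval a (classifier f) = (a yvar == f (inputs a)).
Proof. by rewrite /= eval_dnf; case: (a yvar); case: (f _). Qed.

Lemma eval_cond_classifier f x a : eval a (cond x (classifier f)) = (a yvar == f x).
Proof. by rewrite eval_cond eval_classifier inputs_set_inputs ffunE. Qed.

Lemma classification_classifier f : classification (classifier f).
Proof. by move=> x; apply: classifies_eq_yvar => a; apply: eval_cond_classifier. Qed.

Lemma label_classifier f x : label (classifier f) x = f x.
Proof. by rewrite /label eval_cond_classifier ffunE; case: (f x). Qed.

Definition rectify S T : circuit n := classifier (rectified_label S T).

Lemma rectification_operator_rectify : rectification_operator rectify.
Proof.
split; last split; last split; last split; last split.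
- by move=> S T _; apply: classification_classifier.
- move=> S T x clS; rewrite /fact_compliant fact_compliantE // => okS a.
  by rewrite eval_cond_classifier eval_cond_classifies // /rectified_label okS.
- move=> S T x clS; rewrite (entails_eq_yvar (eval_cond_classifier _ x) (eval_F T x)).
  exact: allowed_rectified_label.
- move=> S T clS incT; apply: classification_lequiv (classification_classifier _) clS _.
  by move=> x; rewrite label_classifier /rectified_label allowed_inconsistent.
- move=> S S' T T' _ _ SS' TT' a; rewrite !eval_classifier /rectified_label.
  by rewrite (label_lequiv _ SS') /allowed (F_lequiv _ TT').
- by [].
Qed.

Lemma label_rectification star S T x : rectification_operator star ->
  classification S -> label (star S T) x = rectified_label S T x.
Proof.
move=> [RE1 [RE2 [RE3 _]]] clS; rewrite /rectified_label.
case: ifPn => [okS|notokS].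
  by rewrite /label (RE2 S T x clS) // /fact_compliant fact_compliantE.
have := RE3 S T x clS; rewrite fact_compliantE; last exact: RE1.
by case: (label S x) notokS; case: (label _ x) => // /negbTE->.
Qed.

Lemma rectification_lequiv_rectify star S T : rectification_operator star ->
  classification S -> lequiv (star S T) (rectify S T).
Proof.
move=> star_rect clS; have [RE1 _] := star_rect.
apply: classification_lequiv (RE1 S T clS) (classification_classifier _) _ => x.
by rewrite label_classifier (label_rectification _ _ star_rect).
Qed.

End Rectification.

Theorem proposition1 (n : nat) :
  (exists star : circuit n -> circuit n -> circuit n, rectification_operator star) /\
  (forall star star' : circuit n -> circuit n -> circuit n,
      rectification_operator star -> rectification_operator star' ->
      forall S T : circuit n, classification S -> lequiv (star S T) (star' S T)).
Proof.
split; first by exists (@rectify n); apply: rectification_operator_rectify.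
move=> star star' rect rect' S T clS a.
by rewrite (rectification_lequiv_rectify T rect clS a) (rectification_lequiv_rectify T rect' clS a).
Qed.
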